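(* Let $\mathcal{A}$ be a finite set of positive integers, let $w \leqslant z$ be real numbers, let $0 < m_0 \leqslant 1$, and let $m_1, m_2, m_3, m_4$ be real numbers with $(m_1, m_2) \in \mathcal{U}$ and $(m_3, m_4) \in \mathcal{U}$. Writing $N^r_5 = \sum_{0 \leqslant i_1 < \cdots < i_r \leqslant 4} m_{i_1}\cdots m_{i_r}$ and $Q = m_0m_1m_2m_3m_4$, we have $$ S(\mathcal{A}, z) \geqslant S(\mathcal{A}, w) - \frac{N^4_5 - N^3_5 + N^2_5 - N^1_5 + 1}{Q} \sum_{w \leqslant p_1 < z} S(\mathcal{A}_{p_1}, w) + \frac{2(N^3_5 - 3N^2_5 + 7N^1_5 - 15)}{Q} \sum_{w \leqslant p_2 < p_1 < z} S(\mathcal{A}_{p_1p_2}, w) $$ $$ - \frac{6(N^2_5 - 6N^1_5 + 25)}{Q} \sum_{w \leqslant p_3 < p_2 < p_1 < z} S(\mathcal{A}_{p_1p_2p_3}, w) + \frac{24(N^1_5 - 10)}{Q} \sum_{w \leqslant p_4 < \cdots < p_1 < z} S(\mathcal{A}_{p_1p_2p_3p_4}, w) - \frac{120}{Q} \sum_{w \leqslant p_5 < \cdots < p_1 < z} S(\mathcal{A}_{p_1\cdots p_5}, w). $$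
   Context: Throughout, $p, p_1, p_2, \dots$ denote prime numbers. For a finite set $\mathcal{A}$ of positive integers and a positive integer $d$, $\mathcal{A}_d = \{a : ad \in \mathcal{A}\}$. For real $z$, $S(\mathcal{A}, z)$ denotes the number of $a \in \mathcal{A}$ having no prime factor less than $z$. Let $T = (0,1] \cup [2,3] \cup [4,5] \cup \cdots$, i.e. $T$ is the union of $(0,1]$ and the intervals $[k-1,k]$ over all odd integers $k \geqslant 3$, and let $\mathcal{U} = \{(x_1, x_2) : x_1, x_2 \in T,\ |x_1 - x_2| \leqslant 1\}$. *)

From mathcomp Require Import all_boot all_order all_algebra.
From mathcomp Require Import reals.
Set Implicit Arguments. Unset Strict Implicit. Unset Printing Implicit Defensive.
Import Order.TTheory GRing.Theory Num.Theory.
Local Open Scope ring_scope.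

(* A finite set of positive integers is represented by a duplicate-free
   sequence A of positive naturals. *)

Definition Asub (A : seq nat) (d : nat) : seq nat :=
  [seq (a %/ d)%N | a <- A & (d %| a)%N].

Definition Ssieve (R : realType) (A : seq nat) (z : R) : nat :=
  count (fun a => all (fun p => ~~ (prime p && (p%:R < z)) || ~~ (p %| a)%N)
                      (iota 0 a.+1)) A.

Definition primes_in (R : realType) (w z : R) : seq nat :=
  [seq p <- iota 0 (Num.truncn z).+1 | prime p && (w <= p%:R) && (p%:R < z)].

Definition inT (R : realType) (x : R) : Prop :=
  (0 < x <= 1) \/ exists k : nat, [/\ odd k, (3 <= k)%N & (k.-1)%:R <= x <= k%:R].

Definition inU (R : realType) (x1 x2 : R) : Prop :=
  inT x1 /\ inT x2 /\ `|x1 - x2| <= 1.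

Definition Nsym (R : realType) (ms : seq R) (r : nat) : R :=
  \sum_(I : {set 'I_(size ms)} | #|I| == r) \prod_(i in I) ms`_i.

(* Only w-rough elements a of A contribute to the right-hand side.  If k primes
   of [w, z) divide such an a, then a is counted C(k, r) times in the r-th sum,
   so its total weight is 1 - c_1 C(k, 1) + ... - c_5 C(k, 5) = \prod_i (m_i - k) / Q.
   For k = 0 this is 1, and a is z-rough.  For k >= 1 it is <= 0, because
   m_0 - k <= 0 while (m_1 - k)(m_2 - k) and (m_3 - k)(m_4 - k) are >= 0: no
   integer k >= 1 lies strictly between two points of T at distance <= 1. *)

From mathcomp Require Import all_boot all_order all_algebra.
From mathcomp Require Import reals.
From mathcomp Require Import ring lra zify.
Import Order.TTheory GRing.Theory Num.Theory.

Set Implicit Arguments. Unset Strict Implicit. Unset Printing Implicit Defensive.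

Lemma sum_bin_count_ltn (s : seq nat) (b r : nat) : sorted ltn s ->
  \sum_(p <- s | p < b) 'C(count (fun y => y < p) s, r) =
  'C(count (fun y => y < b) s, r.+1).
Proof.
elim/last_ind: s => [|s x IHs]; first by rewrite big_nil bin0n.
rewrite !(sorted_pairwise ltn_trans) pairwise_rcons => /andP[s_lt_x].
rewrite -(sorted_pairwise ltn_trans) => /IHs {}IHs.
have count_s (c : nat) : x <= c -> count (fun y => y < c) s = size s.
  move=> le_xc; rewrite -count_predT; apply: eq_in_count => y /(allP s_lt_x) /= lt_yx.
  exact: leq_trans lt_yx le_xc.
rewrite -cats1 big_cat /= big_cons big_nil !count_cat /= ltnn !addn0.
have -> : \sum_(p <- s | p < b) 'C(count (fun y => y < p) (s ++ [:: x]), r) =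
          \sum_(p <- s | p < b) 'C(count (fun y => y < p) s, r).
  rewrite big_seq_cond [RHS]big_seq_cond.
  apply: eq_bigr => p /andP[/(allP s_lt_x) /= lt_px _].
  by rewrite count_cat /= ltnNge (ltnW lt_px) !addn0.
rewrite {}IHs (count_s x) //.
case: (ltnP x b) => [lt_xb|_]; last by rewrite !addn0.
by rewrite (count_s b (ltnW lt_xb)) addn1 binS addnC.
Qed.

Local Open Scope ring_scope.

Lemma natr_bin_fact (R : comNzRingType) (n k : nat) :
  ('C(n, k) * k`!)%:R = \prod_(i < k) (n%:R - i%:R) :> R.
Proof.
elim: k => [|k IHk]; first by rewrite bin0 fact0 big_ord0.
rewrite big_ord_recr /= -{}IHk factS mulnA (mulnC _ k.+1) mul_bin_left.
rewrite -mulnA natrM mulrC.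
case: (leqP k n) => [le_kn|lt_nk]; first by rewrite natrB.
by rewrite bin_small // !mul0n !mul0r.
Qed.

Lemma natr_count (R : nzSemiRingType) (T : Type) (P : pred T) (s : seq T) :
  (count P s)%:R = \sum_(x <- s) (P x)%:R :> R.
Proof. by elim: s => [|x s IHs]; rewrite ?big_nil ?big_cons //= natrD IHs. Qed.

Section ElementarySymmetric.
Variables (R : realType) (ms : seq R).

Lemma Nsym0 : Nsym ms 0 = 1.
Proof.
rewrite /Nsym (eq_bigl (fun I => I == set0)) => [|I]; last exact: cards_eq0.
by rewrite big_pred1_eq big_set0.
Qed.

Lemma Nsym_size : Nsym ms (size ms) = \prod_(m <- ms) m.
Proof.
rewrite /Nsym (eq_bigl (fun I => I == setT)) => [|I]; last first.
  rewrite eqEcard subsetT cardsT card_ord eqn_leq.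
  by rewrite -[X in (#|I| <= X)%N]card_ord max_card.
by rewrite big_pred1_eq (big_nth 0) big_mkord; apply: eq_bigl => i; rewrite in_setT.
Qed.

Lemma prod_subr_Nsym (x : R) : \prod_(m <- ms) (x - m) =
  \sum_(i < (size ms).+1) (-1) ^+ (size ms - i) * Nsym ms (size ms - i) * x ^+ i.
Proof.
under eq_bigr do rewrite -hornerXsubC.
rewrite -horner_prod horner_coef size_prod_XsubC; apply: eq_bigr => i _.
by rewrite coef_prod_XsubC // -ltnS.
Qed.

End ElementarySymmetric.

Lemma prod_subr_Nsym5 (R : realType) (m0 m1 m2 m3 m4 x : R) :
  let ms := [:: m0; m1; m2; m3; m4] in
  (m0 - x) * (m1 - x) * (m2 - x) * (m3 - x) * (m4 - x) =
  m0 * m1 * m2 * m3 * m4 - Nsym ms 4 * x + Nsym ms 3 * x ^+ 2 - Nsym ms 2 * x ^+ 3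
  + Nsym ms 1 * x ^+ 4 - x ^+ 5.
Proof.
move=> ms; have := prod_subr_Nsym ms x; have := Nsym_size ms; have := Nsym0 ms.
rewrite !big_ord_recr big_ord0 !big_cons !big_nil /= => -> ->.
rewrite !subn0 !mulr1 => expand.
transitivity (- ((x - m0) * ((x - m1) * ((x - m2) * ((x - m3) * (x - m4)))))); first by ring.
rewrite expand; ring.
Qed.

Section T_and_U.
Variable R : realType.
Implicit Types x y : R.

Lemma inT_gt0 x : inT x -> 0 < x.
Proof.
case=> [/andP[] // | [k [_ k_ge3 /andP[k_le _]]]].
by apply: lt_le_trans k_le; rewrite ltr0n; lia.
Qed.

Lemma inT_between_even x (k : nat) : inT x -> k%:R < x < k.+1%:R -> ~~ odd k.
Proof.
move=> + /andP[kx xk]; case=> [/andP[_ x_le1] | [j [odd_j j_ge3 /andP[jx xj]]]].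
  have : (k < 1)%N by rewrite -(ltr_nat R); exact: lt_le_trans kx x_le1.
  by case: k {kx xk}.
have lt_kj : (k < j)%N by rewrite -(ltr_nat R); exact: lt_le_trans kx xj.
have lt_jk : (j.-1 < k.+1)%N by rewrite -(ltr_nat R); exact: le_lt_trans jx xk.
have -> : k = j.-1 by lia.
by case: j odd_j {lt_kj lt_jk jx xj j_ge3} => //= j; rewrite negbK.
Qed.

Lemma inT_straddle x y (k : nat) : inT x -> inT y -> y - x <= 1 -> (0 < k)%N ->
  ~~ (x < k%:R < y).
Proof.
move=> Tx Ty dxy; case: k => // k _; apply/negP => /andP[xk ky].
have /inT_between_even : k%:R < x < k.+1%:R by rewrite xk andbT; move: ky; rewrite -natr1; lra.
have /inT_between_even : k.+1%:R < y < k.+2%:R by rewrite ky /=; move: xk; rewrite -natr1; lra.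
by move=> /(_ Ty) /= /negPn -> /(_ Tx).
Qed.

Lemma inU_mul_ge0 x y (k : nat) : inU x y -> (0 < k)%N -> 0 <= (x - k%:R) * (y - k%:R).
Proof.
move=> [Tx [Ty dxy]] k_gt0; move: dxy; rewrite ler_norml => /andP[dyx dxy].
rewrite leNgt mulr_lt0 !subr_eq0 !subr_lt0; apply/negP => /and3P[xk_neq yk_neq].
case: ltP => xk; case: ltP => yk //= _.
- have /negP : ~~ (x < k%:R < y) by apply: inT_straddle => //; lra.
  by rewrite xk lt_neqAle eq_sym yk_neq yk.
- have /negP : ~~ (y < k%:R < x) by apply: inT_straddle => //; lra.
  by rewrite yk lt_neqAle eq_sym xk_neq xk.
Qed.

End T_and_U.

Section Weight.
Variables (R : realType) (m0 m1 m2 m3 m4 : R).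
Let ms := [:: m0; m1; m2; m3; m4].
Let N1 := Nsym ms 1.
Let N2 := Nsym ms 2.
Let N3 := Nsym ms 3.
Let N4 := Nsym ms 4.
Let Q := m0 * m1 * m2 * m3 * m4.

(* The coefficients expand \prod_i (m_i - x) = Q - N4 x + ... - x^5 in the basis of
   the binomial polynomials C(x, r), via x^n = \sum_r S(n, r) r! C(x, r). *)
Lemma sieve_weight_prod (k : nat) : Q != 0 ->
  1 - (N4 - N3 + N2 - N1 + 1) / Q * 'C(k, 1)%:R
    + 2 * (N3 - 3 * N2 + 7 * N1 - 15) / Q * 'C(k, 2)%:R
    - 6 * (N2 - 6 * N1 + 25) / Q * 'C(k, 3)%:R
    + 24 * (N1 - 10) / Q * 'C(k, 4)%:R
    - 120 / Q * 'C(k, 5)%:R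
  = (m0 - k%:R) * (m1 - k%:R) * (m2 - k%:R) * (m3 - k%:R) * (m4 - k%:R) / Q.
Proof.
move=> Q_neq0.
have binE r : 'C(k, r)%:R = (\prod_(i < r) (k%:R - i%:R)) / r`!%:R :> R.
  by rewrite -natr_bin_fact natrM mulfK // pnatr_eq0 -lt0n fact_gt0.
rewrite !binE !big_ord_recr !big_ord0 /= prod_subr_Nsym5 -/ms -/N1 -/N2 -/N3 -/N4 -/Q.
rewrite !factS fact0 !natrM /=; field; exact: Q_neq0.
Qed.

Lemma sieve_weight_le (k : nat) (G L : bool) :
  0 < m0 <= 1 -> inU m1 m2 -> inU m3 m4 -> (G -> k = 0%N -> L) ->
  G%:R - (N4 - N3 + N2 - N1 + 1) / Q * (G%:R * 'C(k, 1)%:R)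
    + 2 * (N3 - 3 * N2 + 7 * N1 - 15) / Q * (G%:R * 'C(k, 2)%:R)
    - 6 * (N2 - 6 * N1 + 25) / Q * (G%:R * 'C(k, 3)%:R)
    + 24 * (N1 - 10) / Q * (G%:R * 'C(k, 4)%:R)
    - 120 / Q * (G%:R * 'C(k, 5)%:R) <= L%:R.
Proof.
move=> /andP[m0_gt0 m0_le1] U12 U34 GkL.
have Q_gt0 : 0 < Q.
  case: U12 U34 => [/inT_gt0 ? [/inT_gt0 ? _]] [/inT_gt0 ? [/inT_gt0 ? _]].
  by rewrite /Q !mulr_gt0.
case: G GkL => /= GkL; last by rewrite !mul0r !mulr0 !subr0 !addr0.
rewrite !mul1r sieve_weight_prod ?gt_eqF //.
case: k GkL => [/(_ isT erefl) -> | k _]; first by rewrite !subr0 divff ?gt_eqF.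
apply: le_trans (ler0n _ L); rewrite ler_pdivrMr // mul0r.
set x := k.+1%:R.
have -> : (m0 - x) * (m1 - x) * (m2 - x) * (m3 - x) * (m4 - x) =
          (m0 - x) * ((m1 - x) * (m2 - x) * ((m3 - x) * (m4 - x))) by ring.
apply: mulr_le0_ge0; first by rewrite subr_le0 (le_trans m0_le1) // ler1n.
by apply: mulr_ge0; apply: inU_mul_ge0.
Qed.

End Weight.

Section Sieve.
Variables (R : realType) (w : R).

Definition rough (n : nat) : bool :=
  all (fun p => ~~ (prime p && (p%:R < w)) || ~~ (p %| n)%N) (iota 0 n.+1).

Lemma roughP n : (0 < n)%N ->
  reflect (forall p, prime p -> (p %| n)%N -> w <= p%:R) (rough n).
Proof.
move=> n_gt0; apply: (iffP allP) => [rough_n p p_pr p_dvd | rough_n p _].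
  have : p \in iota 0 n.+1 by rewrite mem_iota add0n ltnS (dvdn_leq n_gt0 p_dvd).
  by move/rough_n; rewrite p_pr p_dvd orbF leNgt.
rewrite negb_and -leNgt; case: (boolP (prime p)) => //= p_pr.
by case: (boolP (p %| n)%N) => [/(rough_n _ p_pr) -> | _]; rewrite ?orbT.
Qed.

Definition sift (d a : nat) : bool := (d %| a)%N && rough (a %/ d).

Lemma Ssieve_Asub (A : seq nat) d : Ssieve (Asub A d) w = count (sift d) A.
Proof.
by rewrite /Ssieve /Asub count_map count_filter; apply: eq_count => a /=; rewrite andbC.
Qed.

Lemma Ssieve_count (A : seq nat) : Ssieve A w = count rough A.
Proof. by []. Qed.

Definition factors_ge (b D : nat) : Prop :=
  forall q, prime q -> (q %| D)%N -> (b <= q)%N /\ w <= q%:R.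

Lemma factors_ge1 b : factors_ge b 1.
Proof. by move=> q q_pr; rewrite dvdn1 => /eqP q1; rewrite q1 in q_pr. Qed.

Lemma factors_ge_mulp b D p : factors_ge b D -> prime p -> w <= p%:R -> (p < b)%N ->
  factors_ge p (D * p).
Proof.
move=> D_ge p_pr w_le_p lt_pb q q_pr.
rewrite Euclid_dvdM // => /orP[/(D_ge q q_pr)[le_bq w_le_q]|].
  by split=> //; apply: leq_trans (ltnW lt_pb) le_bq.
by rewrite dvdn_prime2 // => /eqP ->.
Qed.

Lemma sift_rough a b D : (0 < a)%N -> factors_ge b D -> sift D a = (D %| a)%N && rough a.
Proof.
move=> a_gt0 D_ge; rewrite /sift; case: (boolP (D %| a)%N) => //= D_dvd.
have D_gt0 : (0 < D)%N by apply: dvdn_gt0 D_dvd.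
have aD_gt0 : (0 < a %/ D)%N by rewrite divn_gt0 // dvdn_leq.
apply/(roughP aD_gt0)/(roughP a_gt0) => [rough_aD p p_pr|rough_a p p_pr p_dvd].
  rewrite -(divnK D_dvd) Euclid_dvdM // => /orP[/(rough_aD _ p_pr) //|/(D_ge _ p_pr)[]//].
by apply: rough_a; rewrite // -(divnK D_dvd) dvdn_mulr.
Qed.

Lemma sift_mulp a b D p : (0 < a)%N -> factors_ge b D -> prime p -> w <= p%:R ->
  (p < b)%N -> sift (D * p) a = sift D a && (p %| a)%N.
Proof.
move=> a_gt0 D_ge p_pr w_le_p lt_pb.
have coprime_Dp : coprime D p.
  rewrite coprime_sym prime_coprime //; apply/negP => /(D_ge _ p_pr)[le_bp _].
  by move: lt_pb; rewrite ltnNge le_bp.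
rewrite (sift_rough a_gt0 (factors_ge_mulp D_ge p_pr w_le_p lt_pb)) (sift_rough a_gt0 D_ge).
by rewrite Gauss_dvd // andbAC.
Qed.

Section Divisor_chains.
Variables (z : R) (a : nat).
Hypothesis a_gt0 : (0 < a)%N.
Let P := primes_in w z.
Let cnt b := count (fun p => p < b)%N [seq p <- P | (p %| a)%N].

Lemma mem_primes_in p : (p \in P) = [&& prime p, w <= p%:R & p%:R < z].
Proof.
rewrite mem_filter mem_iota /= -andbA; case: (prime p) => //=.
case: (boolP (p%:R < z)) => [lt_pz|]; last by rewrite !andbF.
by rewrite add0n ltnS truncn_ge_nat ?(ltW lt_pz) // (le_trans _ (ltW lt_pz)).
Qed.

Lemma sorted_primes_in : sorted ltn P.
Proof. exact/sorted_filter/iota_ltn_sorted/ltn_trans. Qed.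

(* One layer of summation is the hockey-stick identity on the primes of P dividing a. *)
Lemma sum_sift_step (F : nat -> R) D b j : factors_ge b D ->
  (forall p, p \in P -> (p < b)%N -> factors_ge p (D * p) ->
     F p = (sift (D * p) a)%:R * 'C(cnt p, j)%:R) ->
  \sum_(p <- P | (p < b)%N) F p = (sift D a)%:R * 'C(cnt b, j.+1)%:R.
Proof.
move=> D_ge FE; rewrite big_seq_cond.
under eq_bigr => p /andP[p_in lt_pb].
  have /and3P[p_pr w_le_p _] : [&& prime p, w <= p%:R & p%:R < z] by rewrite -mem_primes_in.
  have Dp_ge := factors_ge_mulp D_ge p_pr w_le_p lt_pb.
  rewrite FE // (sift_mulp a_gt0 D_ge) // -mulnb natrM -mulrA.
  over.
rewrite /= -big_seq_cond -mulr_sumr; congr (_ * _).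
rewrite /cnt -sum_bin_count_ltn; last exact: sorted_filter ltn_trans _ _ sorted_primes_in.
rewrite natr_sum big_filter_cond big_mkcondl; apply: eq_bigr => p _.
by case: (p %| a)%N; rewrite ?mul1r ?mul0r.
Qed.

Lemma sum_sift_top (F : nat -> R) j :
  (forall p, p \in P -> factors_ge p p -> F p = (sift p a)%:R * 'C(cnt p, j)%:R) ->
  \sum_(p <- P) F p = (rough a)%:R * 'C(count (fun p => p %| a)%N P, j.+1)%:R.
Proof.
move=> FE; set b := (Num.truncn z).+1.
have P_lt_b p : p \in P -> (p < b)%N by rewrite mem_filter mem_iota => /and3P[].
have cnt_b : cnt b = count (fun p => p %| a)%N P.
  rewrite /cnt -[RHS]size_filter -count_predT; apply: eq_in_count => p.
  by rewrite mem_filter => /andP[_ /P_lt_b].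
rewrite big_seq (eq_bigl (fun p => (p \in P) && (p < b)%N)) => [|p]; last first.
  by case: (boolP (p \in P)) => // /P_lt_b ->.
rewrite -big_seq_cond (@sum_sift_step F 1 b j (factors_ge1 b)) => [|p p_in _].
  by rewrite /sift dvd1n divn1 cnt_b.
by rewrite mul1n; apply: FE.
Qed.

Lemma sum_sift1 :
  \sum_(p1 <- P) (sift p1 a)%:R = (rough a)%:R * 'C(count (fun p => p %| a)%N P, 1)%:R :> R.
Proof. by apply: sum_sift_top => p1 _ _; rewrite bin0 mulr1. Qed.

Lemma sum_sift2 : \sum_(p1 <- P) \sum_(p2 <- P | (p2 < p1)%N) (sift (p1 * p2) a)%:R =
  (rough a)%:R * 'C(count (fun p => p %| a)%N P, 2)%:R :> R.
Proof.
apply: sum_sift_top => p1 _ ge1; apply: (sum_sift_step ge1) => p2 _ _ _.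
by rewrite bin0 mulr1.
Qed.

Lemma sum_sift3 : \sum_(p1 <- P) \sum_(p2 <- P | (p2 < p1)%N) \sum_(p3 <- P | (p3 < p2)%N)
  (sift (p1 * p2 * p3) a)%:R = (rough a)%:R * 'C(count (fun p => p %| a)%N P, 3)%:R :> R.
Proof.
apply: sum_sift_top => p1 _ ge1; apply: (sum_sift_step ge1) => p2 _ _ ge2.
by apply: (sum_sift_step ge2) => p3 _ _ _; rewrite bin0 mulr1.
Qed.

Lemma sum_sift4 : \sum_(p1 <- P) \sum_(p2 <- P | (p2 < p1)%N) \sum_(p3 <- P | (p3 < p2)%N)
  \sum_(p4 <- P | (p4 < p3)%N) (sift (p1 * p2 * p3 * p4) a)%:R =
  (rough a)%:R * 'C(count (fun p => p %| a)%N P, 4)%:R :> R.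
Proof.
apply: sum_sift_top => p1 _ ge1; apply: (sum_sift_step ge1) => p2 _ _ ge2.
apply: (sum_sift_step ge2) => p3 _ _ ge3.
by apply: (sum_sift_step ge3) => p4 _ _ _; rewrite bin0 mulr1.
Qed.

Lemma sum_sift5 : \sum_(p1 <- P) \sum_(p2 <- P | (p2 < p1)%N) \sum_(p3 <- P | (p3 < p2)%N)
  \sum_(p4 <- P | (p4 < p3)%N) \sum_(p5 <- P | (p5 < p4)%N)
    (sift (p1 * p2 * p3 * p4 * p5) a)%:R =
  (rough a)%:R * 'C(count (fun p => p %| a)%N P, 5)%:R :> R.
Proof.
apply: sum_sift_top => p1 _ ge1; apply: (sum_sift_step ge1) => p2 _ _ ge2.
apply: (sum_sift_step ge2) => p3 _ _ ge3; apply: (sum_sift_step ge3) => p4 _ _ ge4.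
by apply: (sum_sift_step ge4) => p5 _ _ _; rewrite bin0 mulr1.
Qed.

End Divisor_chains.
End Sieve.

Section Sums_over_A.
Variables (R : realType) (w z : R) (A : seq nat).
Hypothesis A_pos : all (fun a => 0 < a)%N A.
Let P := primes_in w z.
Let k a := count (fun p => p %| a)%N P.

Lemma Ssieve_Asub_sum d : (Ssieve (Asub A d) w)%:R = \sum_(a <- A) (sift w d a)%:R :> R.
Proof. by rewrite Ssieve_Asub natr_count. Qed.

Lemma sum_Ssieve_Asub1 : \sum_(p1 <- P) (Ssieve (Asub A p1) w)%:R =
  \sum_(a <- A) (rough w a)%:R * 'C(k a, 1)%:R :> R.
Proof.
rewrite [RHS]big_seq.
under [RHS]eq_bigr => a a_in do rewrite -(sum_sift1 w z (allP A_pos a a_in)).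
rewrite -big_seq [RHS]exchange_big; apply: eq_bigr => p1 _.
exact: Ssieve_Asub_sum.
Qed.

Lemma sum_Ssieve_Asub2 :
  \sum_(p1 <- P) \sum_(p2 <- P | (p2 < p1)%N) (Ssieve (Asub A (p1 * p2)) w)%:R =
  \sum_(a <- A) (rough w a)%:R * 'C(k a, 2)%:R :> R.
Proof.
rewrite [RHS]big_seq.
under [RHS]eq_bigr => a a_in do rewrite -(sum_sift2 w z (allP A_pos a a_in)).
rewrite -big_seq [RHS]exchange_big; apply: eq_bigr => p1 _.
rewrite [RHS]exchange_big; apply: eq_bigr => p2 _.
exact: Ssieve_Asub_sum.
Qed.

Lemma sum_Ssieve_Asub3 :
  \sum_(p1 <- P) \sum_(p2 <- P | (p2 < p1)%N) \sum_(p3 <- P | (p3 < p2)%N)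
    (Ssieve (Asub A (p1 * p2 * p3)) w)%:R =
  \sum_(a <- A) (rough w a)%:R * 'C(k a, 3)%:R :> R.
Proof.
rewrite [RHS]big_seq.
under [RHS]eq_bigr => a a_in do rewrite -(sum_sift3 w z (allP A_pos a a_in)).
rewrite -big_seq [RHS]exchange_big; apply: eq_bigr => p1 _.
rewrite [RHS]exchange_big; apply: eq_bigr => p2 _.
rewrite [RHS]exchange_big; apply: eq_bigr => p3 _.
exact: Ssieve_Asub_sum.
Qed.

Lemma sum_Ssieve_Asub4 :
  \sum_(p1 <- P) \sum_(p2 <- P | (p2 < p1)%N) \sum_(p3 <- P | (p3 < p2)%N)
  \sum_(p4 <- P | (p4 < p3)%N) (Ssieve (Asub A (p1 * p2 * p3 * p4)) w)%:R =
  \sum_(a <- A) (rough w a)%:R * 'C(k a, 4)%:R :> R.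
Proof.
rewrite [RHS]big_seq.
under [RHS]eq_bigr => a a_in do rewrite -(sum_sift4 w z (allP A_pos a a_in)).
rewrite -big_seq [RHS]exchange_big; apply: eq_bigr => p1 _.
rewrite [RHS]exchange_big; apply: eq_bigr => p2 _.
rewrite [RHS]exchange_big; apply: eq_bigr => p3 _.
rewrite [RHS]exchange_big; apply: eq_bigr => p4 _.
exact: Ssieve_Asub_sum.
Qed.

Lemma sum_Ssieve_Asub5 :
  \sum_(p1 <- P) \sum_(p2 <- P | (p2 < p1)%N) \sum_(p3 <- P | (p3 < p2)%N)
  \sum_(p4 <- P | (p4 < p3)%N) \sum_(p5 <- P | (p5 < p4)%N)
    (Ssieve (Asub A (p1 * p2 * p3 * p4 * p5)) w)%:R =
  \sum_(a <- A) (rough w a)%:R * 'C(k a, 5)%:R :> R.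
Proof.
rewrite [RHS]big_seq.
under [RHS]eq_bigr => a a_in do rewrite -(sum_sift5 w z (allP A_pos a a_in)).
rewrite -big_seq [RHS]exchange_big; apply: eq_bigr => p1 _.
rewrite [RHS]exchange_big; apply: eq_bigr => p2 _.
rewrite [RHS]exchange_big; apply: eq_bigr => p3 _.
rewrite [RHS]exchange_big; apply: eq_bigr => p4 _.
rewrite [RHS]exchange_big; apply: eq_bigr => p5 _.
exact: Ssieve_Asub_sum.
Qed.

End Sums_over_A.

Lemma rough_ndvd_primes_in (R : realType) (w z : R) a : (0 < a)%N -> rough w a ->
  count (fun p => p %| a)%N (primes_in w z) = 0%N -> rough z a.
Proof.
move=> a_gt0 rough_a /eqP; rewrite -leqn0 leqNgt -has_count => /hasPn no_div.
apply/(roughP z a_gt0) => p p_pr p_dvd; rewrite leNgt; apply/negP => lt_pz.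
have : p \in primes_in w z by rewrite mem_primes_in p_pr lt_pz (roughP w a_gt0 rough_a).
by move/no_div; rewrite p_dvd.
Qed.

Unset Implicit Arguments.
Set Strict Implicit.

Theorem theorem6 (R : realType) (A : seq nat) (w z m0 m1 m2 m3 m4 : R) :
  uniq A -> all (fun a => (0 < a)%N) A ->
  w <= z -> 0 < m0 <= 1 -> inU m1 m2 -> inU m3 m4 ->
  let ms := [:: m0; m1; m2; m3; m4] in
  let N1 := Nsym ms 1 in let N2 := Nsym ms 2 in
  let N3 := Nsym ms 3 in let N4 := Nsym ms 4 in
  let Q := m0 * m1 * m2 * m3 * m4 in
  let P := primes_in w z in
  (Ssieve (A : seq nat) z)%:R >=
    (Ssieve A w)%:R
    - (N4 - N3 + N2 - N1 + 1) / Q *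
        \sum_(p1 <- P) (Ssieve (Asub A p1) w)%:R
    + 2 * (N3 - 3 * N2 + 7 * N1 - 15) / Q *
        \sum_(p1 <- P) \sum_(p2 <- P | (p2 < p1)%N)
          (Ssieve (Asub A (p1 * p2)) w)%:R
    - 6 * (N2 - 6 * N1 + 25) / Q *
        \sum_(p1 <- P) \sum_(p2 <- P | (p2 < p1)%N) \sum_(p3 <- P | (p3 < p2)%N)
          (Ssieve (Asub A (p1 * p2 * p3)) w)%:R
    + 24 * (N1 - 10) / Q *
        \sum_(p1 <- P) \sum_(p2 <- P | (p2 < p1)%N) \sum_(p3 <- P | (p3 < p2)%N)
        \sum_(p4 <- P | (p4 < p3)%N)
          (Ssieve (Asub A (p1 * p2 * p3 * p4)) w)%:R
    - 120 / Q *
        \sum_(p1 <- P) \sum_(p2 <- P | (p2 < p1)%N) \sum_(p3 <- P | (p3 < p2)%N)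
        \sum_(p4 <- P | (p4 < p3)%N) \sum_(p5 <- P | (p5 < p4)%N)
          (Ssieve (Asub A (p1 * p2 * p3 * p4 * p5)) w)%:R.
Proof.
move=> _ A_pos _ m0_bounds U12 U34; cbv zeta.
rewrite (sum_Ssieve_Asub1 w z A_pos) (sum_Ssieve_Asub2 w z A_pos) (sum_Ssieve_Asub3 w z A_pos).
rewrite (sum_Ssieve_Asub4 w z A_pos) (sum_Ssieve_Asub5 w z A_pos).
rewrite !Ssieve_count !natr_count.
rewrite ![_ * \sum_(a <- A) _]mulr_sumr -sumrB -big_split -sumrB -big_split -sumrB /=.
rewrite big_seq [leRHS]big_seq; apply: ler_sum => a /(allP A_pos) a_gt0.
apply: sieve_weight_le => // rough_a; exact: rough_ndvd_primes_in.
Qed.
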